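(* Let $(S,g_1^0,g_2^0,g_3^0,D_1,D_2,D_3,\xi)\in\mathrm{MC}_{\mathrm{pre}}$. Then for all $A,B\in C^\infty(S,\mathbb{R})$ with $A,B>0$ and all $\sigma\in\{-1,+1\}$, $$\big(S,\,Ag_1^0,\,Ag_2^0,\,Ag_3^0,\,\sigma AB^{g_2^0+g_3^0}D_1,\,\sigma AB^{g_3^0+g_1^0}D_2,\,\sigma AB^{g_1^0+g_2^0}D_3,\,\xi+\log A+(g_1^0+g_2^0+g_3^0)\log B\big)\in\mathrm{MC}_{\mathrm{pre}}.$$
   Context: ''Cyclic $(i,j,k)$'' means $(i,j,k)\in\{(1,2,3),(2,3,1),(3,1,2)\}$. Let $S$ be a smooth manifold diffeomorphic to $\mathbb{R}^3$ and $D_1,D_2,D_3$ a frame of vector fields on $S$; its structure functions $c_{jk}^i\in C^\infty(S,\mathbb{R})$ are defined by $[D_j,D_k]=\sum_{i=1}^3c_{jk}^iD_i$ (so $c_{jk}^i=-c_{kj}^i$). $\mathrm{MC}_{\mathrm{pre}}$ is the set of tuples $(S,g_1^0,g_2^0,g_3^0,D_1,D_2,D_3,\xi)$ with $g_i^0,\xi\in C^\infty(S,\mathbb{R})$ satisfying (E1) $0=g_2^0g_3^0+g_3^0g_1^0+g_1^0g_2^0$, and (E2) $0=D_i(g_j^0+g_k^0)+c_{ij}^j(g_i^0-g_j^0)+c_{ik}^k(g_i^0-g_k^0)-2D_i(\xi)g_i^0$ for all cyclic $(i,j,k)$. Here $B^{f}$ means $e^{f\log B}$. *)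

(* classical reals. S is modelled as R^3 itself. *)
From Stdlib Require Import Reals Lra List ClassicalEpsilon.
Open Scope R_scope.

Inductive idx : Type := I1 | I2 | I3.

Definition idx_eqb (a b : idx) : bool :=
  match a, b with
  | I1, I1 | I2, I2 | I3, I3 => true
  | _, _ => false
  end.

(* cyclic successor: (i, nxt i, nxt (nxt i)) runs over the cyclic triples *)
Definition nxt (i : idx) : idx :=
  match i with I1 => I2 | I2 => I3 | I3 => I1 end.

Definition sum3 (F : idx -> R) : R := F I1 + F I2 + F I3.

Definition point := idx -> R.

Definition upd (x : point) (m : idx) (t : R) : point :=
  fun k => if idx_eqb k m then t else x k.

(* partial derivative in coordinate m (chosen by epsilon; meaningful when it exists) *)
Definition pd (m : idx) (f : point -> R) (x : point) : R :=
  epsilon (inhabits 0)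
    (fun l => derivable_pt_lim (fun t => f (upd x m t)) (x m) l).

Fixpoint iter_pd (l : list idx) (f : point -> R) : point -> R :=
  match l with
  | nil => f
  | m :: l' => pd m (iter_pd l' f)
  end.

Definition cont3 (f : point -> R) : Prop :=
  forall x eps, 0 < eps -> exists delta, 0 < delta /\
    forall y, (forall m, Rabs (y m - x m) < delta) -> Rabs (f y - f x) < eps.

Definition smooth (f : point -> R) : Prop :=
  forall l : list idx, cont3 (iter_pd l f) /\
    forall m x, derivable_pt_lim (fun t => iter_pd l f (upd x m t)) (x m)
                                 (iter_pd (m :: l) f x).

(* vector field = its coefficient functions in the coordinate frame of R^3 *)
Definition VF := idx -> point -> R.

Definition smooth_vf (V : VF) : Prop := forall m, smooth (V m).

Definition vf_app (V : VF) (f : point -> R) : point -> R :=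
  fun x => sum3 (fun m => V m x * pd m f x).

Definition bracket (V W : VF) : VF :=
  fun m x => vf_app V (W m) x - vf_app W (V m) x.

Definition scale (h : point -> R) (V : VF) : VF := fun m x => h x * V m x.

Definition det3 (M : idx -> idx -> R) : R :=
  M I1 I1 * (M I2 I2 * M I3 I3 - M I2 I3 * M I3 I2)
  - M I1 I2 * (M I2 I1 * M I3 I3 - M I2 I3 * M I3 I1)
  + M I1 I3 * (M I2 I1 * M I3 I2 - M I2 I2 * M I3 I1).

Definition is_frame (D : idx -> VF) : Prop :=
  (forall i, smooth_vf (D i)) /\ forall x, det3 (fun i m => D i m x) <> 0.

(* c j k i = c_{jk}^i :  [D_j, D_k] = sum_i c_{jk}^i D_i *)
Definition is_structure (D : idx -> VF) (c : idx -> idx -> idx -> point -> R) : Prop :=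
  forall j k m x, bracket (D j) (D k) m x = sum3 (fun i => c j k i x * D i m x).

Definition Bpow (B f : point -> R) : point -> R := fun x => exp (f x * ln (B x)).

Definition MC_pre (g : idx -> point -> R) (D : idx -> VF) (xi : point -> R) : Prop :=
  (forall i, smooth (g i)) /\ smooth xi /\ is_frame D /\
  (forall x, 0 = g I2 x * g I3 x + g I3 x * g I1 x + g I1 x * g I2 x) /\
  exists c, is_structure D c /\
    forall i x,
      let j := nxt i in let k := nxt (nxt i) in
      0 = vf_app (D i) (fun y => g j y + g k y) x
          + c i j j x * (g i x - g j x) + c i k k x * (g i x - g k x)
          - 2 * vf_app (D i) xi x * g i x.

From Stdlib Require Import Reals Lra List ClassicalEpsilon FunctionalExtensionality.
Open Scope R_scope.

(* Write F_i = sigma A B^(g_j + g_k) for the factor multiplying D_i.  The proof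
   has three parts.
   1. Calculus on S = R^3: the partial derivative [pd] obeys the sum, product
      and chain rules, and the class [elementary] of functions generated from
      smooth ones by +, *, exp and ln (of positive functions) is closed under
      [pd], hence consists of smooth functions.  This settles every smoothness
      and differentiability side condition.
   2. Rescaled frames: (F_i D_i) is again a frame, with structure functions
      c'_{ij}^j = F_i (c_{ij}^j + D_i(F_j)/F_j) for i <> j
      ([rescaled_structure_diag]), and D_i(F_j)/F_j is the logarithmic
      derivative D_i(A)/A + D_i(g_k + g_i) log B + (g_k + g_i) D_i(B)/B.
   3. (E1) is homogeneous of degree 2 in g, so it survives g -> A g; the new
      (E2) residual for the index i equals F_i A times the old one, minus
      F_i A log B times D_i applied to (E1), minus 2 F_i A D_i(B)/B times (E1)
      ([rescaled_E2]); all three vanish. *)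

Lemma upd_self (x : point) (m : idx) : upd x m (x m) = x.
Proof. apply functional_extensionality; intro k; unfold upd; destruct k, m; reflexivity. Qed.

Lemma pd_of_lim (m : idx) (f : point -> R) (x : point) (l : R) :
  derivable_pt_lim (fun t => f (upd x m t)) (x m) l -> pd m f x = l.
Proof.
  intro Hl; unfold pd.
  pose proof (epsilon_spec (inhabits 0)
    (fun l => derivable_pt_lim (fun t => f (upd x m t)) (x m) l) (ex_intro _ l Hl)) as Hs.
  exact (uniqueness_limite _ _ _ _ Hs Hl).
Qed.

Definition pdiff (f : point -> R) : Prop :=
  forall m x, derivable_pt_lim (fun t => f (upd x m t)) (x m) (pd m f x).

Section PartialRules.
Variables (m : idx) (x : point).

Lemma lim_const (c : R) : derivable_pt_lim (fun t => (fun _ : point => c) (upd x m t)) (x m) 0.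
Proof. apply (derivable_pt_lim_const c). Qed.

Lemma lim_add (f g : point -> R) : pdiff f -> pdiff g ->
  derivable_pt_lim (fun t => f (upd x m t) + g (upd x m t)) (x m) (pd m f x + pd m g x).
Proof.
  intros Hf Hg.
  exact (derivable_pt_lim_plus (fun t => f (upd x m t)) (fun t => g (upd x m t)) _ _ _
           (Hf m x) (Hg m x)).
Qed.

Lemma lim_mul (f g : point -> R) : pdiff f -> pdiff g ->
  derivable_pt_lim (fun t => f (upd x m t) * g (upd x m t)) (x m)
    (pd m f x * g x + f x * pd m g x).
Proof.
  intros Hf Hg.
  pose proof (derivable_pt_lim_mult (fun t => f (upd x m t)) (fun t => g (upd x m t))
    _ _ _ (Hf m x) (Hg m x)) as Hm.
  cbv beta in Hm; rewrite upd_self in Hm; exact Hm.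
Qed.

Lemma lim_exp (f : point -> R) : pdiff f ->
  derivable_pt_lim (fun t => exp (f (upd x m t))) (x m) (exp (f x) * pd m f x).
Proof.
  intro Hf.
  pose proof (derivable_pt_lim_comp (fun t => f (upd x m t)) exp _ _ _ (Hf m x)
    (derivable_pt_lim_exp _)) as Hm.
  rewrite upd_self in Hm; exact Hm.
Qed.

Lemma lim_ln (f : point -> R) : pdiff f -> 0 < f x ->
  derivable_pt_lim (fun t => ln (f (upd x m t))) (x m) (/ f x * pd m f x).
Proof.
  intros Hf Hpos.
  assert (Hpos' : 0 < f (upd x m (x m))) by (rewrite upd_self; exact Hpos).
  pose proof (derivable_pt_lim_comp (fun t => f (upd x m t)) ln _ _ _ (Hf m x)
    (derivable_pt_lim_ln _ Hpos')) as Hm.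
  rewrite upd_self in Hm; exact Hm.
Qed.

Lemma pd_const (c : R) : pd m (fun _ => c) x = 0.
Proof. exact (pd_of_lim _ _ _ _ (lim_const c)). Qed.

Lemma pd_add (f g : point -> R) : pdiff f -> pdiff g ->
  pd m (fun y => f y + g y) x = pd m f x + pd m g x.
Proof. intros; apply pd_of_lim, lim_add; assumption. Qed.

Lemma pd_mul (f g : point -> R) : pdiff f -> pdiff g ->
  pd m (fun y => f y * g y) x = pd m f x * g x + f x * pd m g x.
Proof. intros; apply pd_of_lim, lim_mul; assumption. Qed.

Lemma pd_exp (f : point -> R) : pdiff f -> pd m (fun y => exp (f y)) x = exp (f x) * pd m f x.
Proof. intros; apply pd_of_lim, lim_exp; assumption. Qed.

Lemma pd_ln (f : point -> R) : pdiff f -> 0 < f x ->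
  pd m (fun y => ln (f y)) x = / f x * pd m f x.
Proof. intros; apply pd_of_lim, lim_ln; assumption. Qed.

End PartialRules.

Lemma cont3_const (c : R) : cont3 (fun _ => c).
Proof.
  intros x eps Heps; exists 1; split; [lra|].
  intros; rewrite Rminus_diag, Rabs_R0; exact Heps.
Qed.

Lemma cont3_add (f g : point -> R) : cont3 f -> cont3 g -> cont3 (fun y => f y + g y).
Proof.
  intros Hf Hg x eps Heps.
  destruct (Hf x (eps / 2)) as [d1 [Hd1 H1]]; [lra|].
  destruct (Hg x (eps / 2)) as [d2 [Hd2 H2]]; [lra|].
  exists (Rmin d1 d2); split; [apply Rmin_pos; assumption|].
  intros y Hy.
  pose proof (H1 y (fun m => Rlt_le_trans _ _ _ (Hy m) (Rmin_l _ _))).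
  pose proof (H2 y (fun m => Rlt_le_trans _ _ _ (Hy m) (Rmin_r _ _))).
  replace (f y + g y - (f x + g x)) with ((f y - f x) + (g y - g x)) by ring.
  eapply Rle_lt_trans; [apply Rabs_triang | lra].
Qed.

Lemma cont3_comp (phi : R -> R) (f : point -> R) :
  cont3 f -> (forall x, continuity_pt phi (f x)) -> cont3 (fun y => phi (f y)).
Proof.
  intros Hf Hphi x eps Heps.
  destruct (Hphi x eps Heps) as [alpha [Halpha Hlim]].
  destruct (Hf x alpha Halpha) as [d [Hd Hclose]].
  exists d; split; [exact Hd|]. intros y Hy.
  destruct (Req_dec (f y) (f x)) as [E|E].
  - rewrite E, Rminus_diag, Rabs_R0; exact Heps.
  - apply (Hlim (f y)); split; [split; [exact I | congruence] | exact (Hclose y Hy)].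
Qed.

Lemma continuity_of_lim (phi : R -> R) (y l : R) :
  derivable_pt_lim phi y l -> continuity_pt phi y.
Proof. intro H; apply derivable_continuous_pt; exact (exist _ l H). Qed.

(* Products are continuous by polarization: fg = ((f+g)^2 - (f-g)^2) / 4. *)
Lemma cont3_mul (f g : point -> R) : cont3 f -> cont3 g -> cont3 (fun y => f y * g y).
Proof.
  intros Hf Hg.
  assert (Hsq : forall h, cont3 h -> cont3 (fun y => h y * h y)).
  { intros h Hh; apply (cont3_comp (fun z => z * z)); [exact Hh|]; intro x.
    exact (continuity_of_lim _ _ _ (derivable_pt_lim_mult id id (h x) 1 1
             (derivable_pt_lim_id _) (derivable_pt_lim_id _))). }
  assert (Hscal : forall c h, cont3 h -> cont3 (fun y => c * h y)).
  { intros c h Hh; apply (cont3_comp (fun z => c * z)); [exact Hh|]; intro x.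
    exact (continuity_of_lim _ _ _ (derivable_pt_lim_mult (fct_cte c) id (h x) 0 1
             (derivable_pt_lim_const _ _) (derivable_pt_lim_id _))). }
  replace (fun y => f y * g y) with (fun y => /4 * ((f y + g y) * (f y + g y))
                                    + (-/4) * ((f y + (-1) * g y) * (f y + (-1) * g y)))
    by (apply functional_extensionality; intro y; field).
  apply cont3_add; apply Hscal, Hsq, cont3_add; [exact Hf | exact Hg | exact Hf | ].
  apply Hscal; exact Hg.
Qed.

(* This class is closed under partial derivatives, which
   is how we show that all of its members are smooth. *)
Inductive elementary : (point -> R) -> Prop :=
| el_smooth f : smooth f -> elementary f
| el_const c : elementary (fun _ => c)
| el_add f g : elementary f -> elementary g -> elementary (fun x => f x + g x)
| el_mul f g : elementary f -> elementary g -> elementary (fun x => f x * g x)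
| el_exp f : elementary f -> elementary (fun x => exp (f x))
| el_ln f : elementary f -> (forall x, 0 < f x) -> elementary (fun x => ln (f x)).

Lemma iter_pd_snoc (l : list idx) (m : idx) (f : point -> R) :
  iter_pd l (pd m f) = iter_pd (l ++ m :: nil) f.
Proof. induction l as [|n l IH]; simpl; [reflexivity | rewrite IH; reflexivity]. Qed.

Lemma smooth_pd (m : idx) (f : point -> R) : smooth f -> smooth (pd m f).
Proof.
  intros Hf l; destruct (Hf (l ++ m :: nil)) as [Hc Hd].
  rewrite iter_pd_snoc; split; [exact Hc|].
  intros n x; simpl; rewrite iter_pd_snoc; apply Hd.
Qed.

Lemma pd_ext (m : idx) (f G : point -> R) :
  (forall x, derivable_pt_lim (fun t => f (upd x m t)) (x m) (G x)) -> pd m f = G.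
Proof. intro H; apply functional_extensionality; intro x; apply pd_of_lim, H. Qed.

Lemma elementary_cont3 (f : point -> R) : elementary f -> cont3 f.
Proof.
  induction 1 as [f Hf | c | | | f _ IH | f _ IH Hpos].
  - exact (proj1 (Hf nil)).
  - apply cont3_const.
  - apply cont3_add; assumption.
  - apply cont3_mul; assumption.
  - apply (cont3_comp exp); [exact IH|]; intro x.
    exact (continuity_of_lim _ _ _ (derivable_pt_lim_exp _)).
  - apply (cont3_comp ln); [exact IH|]; intro x.
    exact (continuity_of_lim _ _ _ (derivable_pt_lim_ln _ (Hpos x))).
Qed.

(* Since the class has no reciprocal, the derivative of [ln f] is written
   [exp (- ln f) * f'] to stay inside it. *)
Lemma elementary_pd (f : point -> R) :
  elementary f -> pdiff f /\ forall m, elementary (pd m f).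
Proof.
  induction 1 as [f Hf | c | f g _ [Pf Df] _ [Pg Dg] | f g Ef [Pf Df] Eg [Pg Dg]
                 | f Ef [Pf Df] | f Ef [Pf Df] Hpos]; split.
  - exact (proj2 (Hf nil)).
  - intro m; apply el_smooth, smooth_pd, Hf.
  - intros m x; rewrite pd_const; apply lim_const.
  - intro m; rewrite (pd_ext m _ (fun _ => 0)) by (intro; apply lim_const); apply el_const.
  - intros m x; rewrite pd_add by assumption; apply lim_add; assumption.
  - intro m; rewrite (pd_ext m _ (fun x => pd m f x + pd m g x))
      by (intro; apply lim_add; assumption).
    apply el_add; auto.
  - intros m x; rewrite pd_mul by assumption; apply lim_mul; assumption.
  - intro m; rewrite (pd_ext m _ (fun x => pd m f x * g x + f x * pd m g x))
      by (intro; apply lim_mul; assumption).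
    apply el_add; apply el_mul; auto.
  - intros m x; rewrite pd_exp by assumption; apply lim_exp; assumption.
  - intro m; rewrite (pd_ext m _ (fun x => exp (f x) * pd m f x))
      by (intro; apply lim_exp; assumption).
    apply el_mul; [apply el_exp|]; auto.
  - intros m x; rewrite pd_ln by auto; apply lim_ln; auto.
  - intro m; rewrite (pd_ext m _ (fun x => exp ((-1) * ln (f x)) * pd m f x)).
    + apply el_mul; [apply el_exp, el_mul; [apply el_const | apply el_ln]|]; auto.
    + intro x; replace (exp ((-1) * ln (f x))) with (/ f x); [apply lim_ln; auto|].
      replace ((-1) * ln (f x)) with (- ln (f x)) by ring.
      rewrite exp_Ropp, exp_ln; auto.
Qed.

Lemma elementary_pdiff (f : point -> R) : elementary f -> pdiff f.
Proof. intro H; exact (proj1 (elementary_pd f H)). Qed.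

Lemma elementary_smooth (f : point -> R) : elementary f -> smooth f.
Proof.
  intros Hf l.
  assert (Hl : elementary (iter_pd l f)).
  { induction l as [|m l IH]; [exact Hf | exact (proj2 (elementary_pd _ IH) m)]. }
  split; [exact (elementary_cont3 _ Hl) | exact (elementary_pdiff _ Hl)].
Qed.

Ltac elementary_tac :=
  repeat first [ apply el_const | apply el_add | apply el_mul | apply el_exp
               | (apply el_ln; [ | intro; auto ]) | (apply el_smooth; auto) ].

Section VectorFieldDerivation.
Variables (V : VF) (x : point).

Lemma vf_const (c : R) : vf_app V (fun _ => c) x = 0.
Proof. unfold vf_app, sum3; rewrite !pd_const; ring. Qed.

Lemma vf_const_fun (f : point -> R) (c : R) : (forall y, f y = c) -> vf_app V f x = 0.
Proof.
  intro Hc; replace f with (fun _ : point => c) by (apply functional_extensionality; auto).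
  apply vf_const.
Qed.

Lemma vf_add (f g : point -> R) : pdiff f -> pdiff g ->
  vf_app V (fun y => f y + g y) x = vf_app V f x + vf_app V g x.
Proof. intros; unfold vf_app, sum3; rewrite !pd_add by assumption; ring. Qed.

Lemma vf_mul (f g : point -> R) : pdiff f -> pdiff g ->
  vf_app V (fun y => f y * g y) x = vf_app V f x * g x + f x * vf_app V g x.
Proof. intros; unfold vf_app, sum3; rewrite !pd_mul by assumption; ring. Qed.

Lemma vf_exp (f : point -> R) : pdiff f ->
  vf_app V (fun y => exp (f y)) x = exp (f x) * vf_app V f x.
Proof. intros; unfold vf_app, sum3; rewrite !pd_exp by assumption; ring. Qed.

Lemma vf_ln (f : point -> R) : pdiff f -> 0 < f x ->
  vf_app V (fun y => ln (f y)) x = vf_app V f x / f x.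
Proof.
  intros Hf Hpos; unfold vf_app, sum3; rewrite !pd_ln by assumption.
  field; apply Rgt_not_eq, Hpos.
Qed.

Lemma vf_scale (h f : point -> R) : vf_app (scale h V) f x = h x * vf_app V f x.
Proof. unfold vf_app, scale, sum3; ring. Qed.

End VectorFieldDerivation.

Lemma bracket_scale (h k : point -> R) (V W : VF) (m : idx) (x : point) :
  pdiff h -> pdiff k -> (forall n, pdiff (V n)) -> (forall n, pdiff (W n)) ->
  bracket (scale h V) (scale k W) m x =
  h x * k x * bracket V W m x + h x * vf_app V k x * W m x - k x * vf_app W h x * V m x.
Proof. intros; unfold bracket; rewrite !vf_scale; unfold scale; rewrite !vf_mul by auto; ring. Qed.

Definition rescaled_structure (D : idx -> VF) (F : idx -> point -> R)
  (c : idx -> idx -> idx -> point -> R) (a b i : idx) (x : point) : R :=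
  F a x * F b x * c a b i x / F i x
  + (if idx_eqb i b then F a x * vf_app (D a) (F b) x / F b x else 0)
  - (if idx_eqb i a then F b x * vf_app (D b) (F a) x / F a x else 0).

Lemma rescaled_structure_spec (D : idx -> VF) (F : idx -> point -> R)
  (c : idx -> idx -> idx -> point -> R) :
  is_structure D c -> (forall i x, F i x <> 0) -> (forall i, pdiff (F i)) ->
  (forall i m, pdiff (D i m)) ->
  is_structure (fun i => scale (F i) (D i)) (rescaled_structure D F c).
Proof.
  intros Hc Hnz HF HD a b m x.
  rewrite bracket_scale, Hc by auto; unfold rescaled_structure, sum3, scale.
  pose proof (Hnz I1 x); pose proof (Hnz I2 x); pose proof (Hnz I3 x).
  destruct a, b; cbn [idx_eqb]; field; auto.
Qed.

Lemma rescaled_structure_diag (D : idx -> VF) (F : idx -> point -> R)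
  (c : idx -> idx -> idx -> point -> R) (a b : idx) (x : point) :
  a <> b -> F b x <> 0 ->
  rescaled_structure D F c a b b x = F a x * (c a b b x + vf_app (D a) (F b) x / F b x).
Proof.
  intros Hab Hb; unfold rescaled_structure.
  destruct a, b; try congruence; cbn [idx_eqb]; field; exact Hb.
Qed.

Lemma det3_scale (f : idx -> R) (M : idx -> idx -> R) :
  det3 (fun i m => f i * M i m) = f I1 * f I2 * f I3 * det3 M.
Proof. unfold det3; ring. Qed.

Lemma frame_scale (D : idx -> VF) (F : idx -> point -> R) :
  is_frame D -> (forall i x, F i x <> 0) ->
  (forall i m, smooth (fun x => F i x * D i m x)) ->
  is_frame (fun i => scale (F i) (D i)).
Proof.
  intros [_ Hdet] Hnz Hsm; split; [intros i m; apply Hsm|].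
  intro x; unfold scale.
  change (det3 (fun i m => (fun i => F i x) i * (fun i m => D i m x) i m) <> 0).
  rewrite det3_scale.
  pose proof (Hnz I1 x); pose proof (Hnz I2 x); pose proof (Hnz I3 x); pose proof (Hdet x).
  repeat apply Rmult_integral_contrapositive_currified; assumption.
Qed.

Lemma nxt_neq (i : idx) : i <> nxt i.
Proof. destruct i; discriminate. Qed.

Lemma nxt2_neq (i : idx) : i <> nxt (nxt i).
Proof. destruct i; discriminate. Qed.

Lemma nxt3 (i : idx) : nxt (nxt (nxt i)) = i.
Proof. destruct i; reflexivity. Qed.

Lemma cyclic_sum (h : idx -> R) (i : idx) :
  h I1 + h I2 + h I3 = h i + h (nxt i) + h (nxt (nxt i)).
Proof. destruct i; simpl; ring. Qed.

Lemma cyclic_e2 (h : idx -> R) (i : idx) :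
  h I2 * h I3 + h I3 * h I1 + h I1 * h I2
  = h (nxt i) * h (nxt (nxt i)) + h (nxt (nxt i)) * h i + h i * h (nxt i).
Proof. destruct i; simpl; ring. Qed.

Lemma zero_of_combination (N P Q S a b c : R) :
  0 = P -> 0 = Q -> 0 = S -> N = a * P + b * Q + c * S -> 0 = N.
Proof. intros HP HQ HS HN; rewrite HN, <- HP, <- HQ, <- HS; ring. Qed.

Definition rescale_factor (sigma : R) (A B : point -> R) (g : idx -> point -> R)
  (i : idx) : point -> R :=
  fun x => sigma * A x * Bpow B (fun y => g (nxt i) y + g (nxt (nxt i)) y) x.

Section Rescaling.
Variables (g : idx -> point -> R) (A B : point -> R) (sigma : R).
Hypotheses (Hg : forall i, smooth (g i)) (HA : smooth A) (HB : smooth B)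
  (HApos : forall x, 0 < A x) (HBpos : forall x, 0 < B x) (Hsigma : sigma <> 0).

Let F := rescale_factor sigma A B g.

Lemma rescale_factor_elementary (i : idx) : elementary (F i).
Proof. unfold F, rescale_factor, Bpow; elementary_tac. Qed.

Lemma rescale_factor_neq0 (i : idx) (x : point) : F i x <> 0.
Proof.
  unfold F, rescale_factor, Bpow; pose proof (HApos x).
  pose proof (exp_pos ((g (nxt i) x + g (nxt (nxt i)) x) * ln (B x))).
  repeat apply Rmult_integral_contrapositive_currified; lra.
Qed.

Lemma rescale_factor_logderiv (V : VF) (i : idx) (x : point) :
  vf_app V (F i) x / F i x =
  vf_app V A x / A x + (vf_app V (g (nxt i)) x + vf_app V (g (nxt (nxt i))) x) * ln (B x)
  + (g (nxt i) x + g (nxt (nxt i)) x) * (vf_app V B x / B x).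
Proof.
  pose proof (HApos x); pose proof (HBpos x).
  pose proof (exp_pos ((g (nxt i) x + g (nxt (nxt i)) x) * ln (B x))).
  unfold F, rescale_factor, Bpow.
  rewrite !vf_mul, vf_const, vf_exp, vf_mul, vf_add, vf_ln; auto;
    try (apply elementary_pdiff; elementary_tac).
  field; repeat split; lra.
Qed.

(* Vanishing of the new (E2) residual: it equals F_i A times the old residual,
   corrected by multiples of (E1) and of its derivative along D_i. *)
Lemma rescaled_E2 (D : idx -> VF) (xi : point -> R) (c : idx -> idx -> idx -> point -> R) :
  smooth xi ->
  (forall x, 0 = g I2 x * g I3 x + g I3 x * g I1 x + g I1 x * g I2 x) ->
  (forall i x,
      let j := nxt i in let k := nxt (nxt i) in
      0 = vf_app (D i) (fun y => g j y + g k y) x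
          + c i j j x * (g i x - g j x) + c i k k x * (g i x - g k x)
          - 2 * vf_app (D i) xi x * g i x) ->
  forall i x,
    let j := nxt i in let k := nxt (nxt i) in
    0 = vf_app (scale (F i) (D i)) (fun y => A y * g j y + A y * g k y) x
        + rescaled_structure D F c i j j x * (A x * g i x - A x * g j x)
        + rescaled_structure D F c i k k x * (A x * g i x - A x * g k x)
        - 2 * vf_app (scale (F i) (D i))
                (fun y => xi y + ln (A y) + (g I1 y + g I2 y + g I3 y) * ln (B y)) x
              * (A x * g i x).
Proof.
  intros Hxi HE1 HE2 i x j k.
  assert (Hsum : (fun y => xi y + ln (A y) + (g I1 y + g I2 y + g I3 y) * ln (B y))
                 = (fun y => xi y + ln (A y) + (g i y + g j y + g k y) * ln (B y))).
  { apply functional_extensionality; intro y.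
    rewrite (cyclic_sum (fun m => g m y) i); reflexivity. }
  assert (HE1i : 0 = g j x * g k x + g k x * g i x + g i x * g j x).
  { rewrite (HE1 x); exact (cyclic_e2 (fun m => g m x) i). }
  assert (HdE1 : 0 = vf_app (D i) (fun y => g j y * g k y + g k y * g i y + g i y * g j y) x).
  { symmetry; apply (vf_const_fun (D i) x _ 0); intro y.
    rewrite (HE1 y); symmetry; exact (cyclic_e2 (fun m => g m y) i). }
  pose proof (HE2 i x) as HE2i; cbv zeta in HE2i; fold j k in HE2i.
  assert (Hgd : forall m, pdiff (g m)) by (intro; apply elementary_pdiff; elementary_tac).
  assert (HAd : pdiff A) by (apply elementary_pdiff; elementary_tac).
  assert (HBd : pdiff B) by (apply elementary_pdiff; elementary_tac).
  assert (Hxid : pdiff xi) by (apply elementary_pdiff; elementary_tac).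
  rewrite vf_add in HE2i by auto.
  rewrite !vf_add, !vf_mul in HdE1 by (auto; apply elementary_pdiff; elementary_tac).
  rewrite Hsum, !vf_scale.
  rewrite !rescaled_structure_diag by (apply nxt_neq || apply nxt2_neq || apply rescale_factor_neq0).
  rewrite !rescale_factor_logderiv; unfold j, k in *; rewrite !nxt3.
  rewrite !vf_add, !vf_mul, !vf_ln by (auto; apply elementary_pdiff; elementary_tac).
  rewrite (vf_add _ _ (fun y => g i y + g (nxt i) y)), vf_add
    by (auto; apply elementary_pdiff; elementary_tac).
  apply (zero_of_combination _ _ _ _ (F i x * A x) (- F i x * A x * ln (B x))
           (- 2 * F i x * A x * (vf_app (D i) B x / B x)) HE2i HdE1 HE1i).
  pose proof (HApos x); pose proof (HBpos x); field; split; lra.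
Qed.

End Rescaling.

Theorem lemma6p8 (g : idx -> point -> R) (D : idx -> VF) (xi : point -> R)
  (H : MC_pre g D xi) (A B : point -> R)
  (HA : smooth A) (HB : smooth B)
  (HApos : forall x, 0 < A x) (HBpos : forall x, 0 < B x)
  (sigma : R) (Hsigma : sigma = 1 \/ sigma = -1) :
  MC_pre (fun i x => A x * g i x)
    (fun i => scale (fun x => sigma * A x *
                 Bpow B (fun y => g (nxt i) y + g (nxt (nxt i)) y) x) (D i))
    (fun x => xi x + ln (A x) + (g I1 x + g I2 x + g I3 x) * ln (B x)).
Proof.
  destruct H as [Hg [Hxi [Hframe [HE1 [c [Hc HE2]]]]]].
  assert (Hsigma0 : sigma <> 0) by (destruct Hsigma; lra).
  assert (HD : forall i m, smooth (D i m)) by apply Hframe.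
  change (fun i => scale _ (D i))
    with (fun i => scale (rescale_factor sigma A B g i) (D i)).
  split; [|split; [|split; [|split]]].
  - intro i; apply elementary_smooth; elementary_tac.
  - apply elementary_smooth; elementary_tac.
  - apply frame_scale; [exact Hframe | exact (rescale_factor_neq0 _ _ _ _ HApos Hsigma0) |].
    intros i m; apply elementary_smooth, el_mul;
      [apply rescale_factor_elementary | apply el_smooth]; auto.
  - intro x; rewrite <- (Rmult_0_r (A x * A x)), (HE1 x); ring.
  - exists (rescaled_structure D (rescale_factor sigma A B g) c); split.
    + apply rescaled_structure_spec; auto.
      * exact (rescale_factor_neq0 _ _ _ _ HApos Hsigma0).
      * intro i; apply elementary_pdiff, rescale_factor_elementary; auto.
      * intros i m; apply elementary_pdiff; elementary_tac.
    + exact (rescaled_E2 g A B sigma Hg HA HB HApos HBpos Hsigma0 D xi c Hxi HE1 HE2).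
Qed.
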